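(* Let $M'=M[D,K]$ be a compatible minor of the weighted uncertainty matroid $\mathcal{M}$. If there is a basis $B$ of $M'$ and an element $e\in B$ that has the unique minimum weight in $E(M')\setminus\mathrm{span}_{M'}(B\setminus\{e\})$, then $M[D,K\cup\{e\}]$ is a compatible minor of $\mathcal{M}$.
   Context: A weighted uncertainty matroid $\mathcal{M}=(E,\mathcal{I},A,w)$ consists of a matroid $M=(E,\mathcal{I})$ on a finite set $E$, for each $e\in E$ a non-empty finite union $A_e$ of bounded real intervals (each open or closed), a weight $w_e\in A_e$, and a query cost $c_e\ge0$. A minimum-weight basis (MWB) is a basis minimizing total weight. A weight assignment is $w^*$ with $w^*_e\in A_e$, consistent with $Q$ if $w^*_e=w_e$ on $Q$. $Q$ verifies an MWB $B$ if for every weight assignment consistent with $Q$, $B$ is an MWB with respect to it; a certificate for $\mathcal{M}$ is a set verifying some MWB, and $c^*$ denotes the minimum cost $\sum_{e\in Q}c_e$ of a certificate for $\mathcal{M}$. For $D,K\subseteq E$, $M[D,K]$ is the matroid obtained from $M$ by deleting $D$ and contracting $K$, with ground set $E(M[D,K])=E\setminus(D\cup K)$ and weights restricted. $M[D,K]$ is a compatible minor of $\mathcal{M}$ if there is a set $Q$ of cost $c^*$ that verifies an MWB $B$ of $\mathcal{M}$ with $K\subseteq B$ and $D\cap B=\emptyset$. For a matroid $N$ with rank function $r$, $\mathrm{span}_N(X)=\{e: r(X\cup\{e\})=r(X)\}$. *)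

From HB Require Import structures.
From mathcomp Require Import all_boot all_order all_algebra.
From mathcomp Require Import reals.
Set Implicit Arguments. Unset Strict Implicit. Unset Printing Implicit Defensive.
Import Order.TTheory GRing.Theory Num.Theory.
Local Open Scope ring_scope.

Record matroid (E : finType) := Matroid {
  indep : pred {set E};
  indep0 : indep set0;
  indep_sub : forall X Y : {set E}, indep Y -> X \subset Y -> indep X;
  indep_aug : forall X Y : {set E}, indep X -> indep Y -> (#|X| < #|Y|)%N ->
              exists2 e, e \in Y :\: X & indep (e |: X)
}.

Definition rank_of (E : finType) (I : pred {set E}) (X : {set E}) : nat :=
  \max_(Y : {set E} | (Y \subset X) && I Y) #|Y|.

Definition rank (E : finType) (M : matroid E) (X : {set E}) : nat :=
  rank_of (indep M) X.

Definition is_basis (E : finType) (M : matroid E) (B : {set E}) : bool :=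
  indep M B && [forall e, (e \notin B) ==> ~~ indep M (e |: B)].

Definition minor_ground (E : finType) (D K : {set E}) : {set E} := ~: (D :|: K).

Definition minor_indep (E : finType) (M : matroid E) (D K : {set E})
  (Y : {set E}) : bool :=
  (Y \subset minor_ground D K) && (rank M (Y :|: K) == #|Y| + rank M K)%N.

Definition minor_rank (E : finType) (M : matroid E) (D K : {set E})
  (X : {set E}) : nat := rank_of (minor_indep M D K) X.

Definition minor_is_basis (E : finType) (M : matroid E) (D K B : {set E}) : bool :=
  minor_indep M D K B &&
  [forall e in minor_ground D K, (e \notin B) ==> ~~ minor_indep M D K (e |: B)].

Definition minor_span (E : finType) (M : matroid E) (D K X : {set E}) : {set E} :=
  [set e in minor_ground D K |
     minor_rank M D K (e |: X) == minor_rank M D K X].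

Record ival (R : realType) := Ival { ilo : R; ihi : R; iclosed : bool }.

Definition in_ival (R : realType) (I : ival R) (x : R) : bool :=
  if iclosed I then (ilo I <= x) && (x <= ihi I) else (ilo I < x) && (x < ihi I).

Definition in_area (R : realType) (A : seq (ival R)) (x : R) : bool :=
  has (fun I => in_ival I x) A.

Record wu_matroid (R : realType) (E : finType) := WUMatroid {
  mat : matroid E;
  area : E -> seq (ival R);
  wt : E -> R;
  cost : E -> R;
  area_ne : forall e, (0 < size (area e))%N;
  wt_in : forall e, in_area (area e) (wt e);
  cost_ge0 : forall e, 0 <= cost e
}.

Section WU.
Variables (R : realType) (E : finType) (MM : wu_matroid R E).

Definition basis_weight (w' : E -> R) (B : {set E}) : R := \sum_(e in B) w' e.

Definition is_MWB (w' : E -> R) (B : {set E}) : Prop :=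
  is_basis (mat MM) B /\
  forall B', is_basis (mat MM) B' -> basis_weight w' B <= basis_weight w' B'.

Definition weight_assignment (w' : E -> R) : Prop :=
  forall e, in_area (area MM e) (w' e).

Definition consistent (Q : {set E}) (w' : E -> R) : Prop :=
  weight_assignment w' /\ forall e, e \in Q -> w' e = wt MM e.

Definition verifies (Q B : {set E}) : Prop :=
  forall w', consistent Q w' -> is_MWB w' B.

Definition certificate (Q : {set E}) : Prop := exists B, verifies Q B.

Definition query_cost (Q : {set E}) : R := \sum_(e in Q) cost MM e.

(* Q has cost c^* = minimum cost of a certificate (Q itself being a certificate) *)
Definition optimal_cost (Q : {set E}) : Prop :=
  forall Q', certificate Q' -> query_cost Q <= query_cost Q'.

Definition compatible_minor (D K : {set E}) : Prop :=
  exists Q B, [/\ optimal_cost Q, verifies Q B, K \subset B & [disjoint D & B]].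

End WU.

(* Let Q be an optimal certificate verifying an MWB B0 with K in B0 and D
   disjoint from B0; it suffices to show e \in B0.  Since the true weights are
   consistent with Q, B0 is an MWB for them.  If e were not in B0, the part X
   of B0 inside span_M'(B - e) + K would be spanned in M by (B - e) + K, which
   does not span e; so e + X is independent and extends within e + B0 to a
   basis e + B0 - f with f in B0 - X.  That f lies in E(M') - span_M'(B - e)
   and differs from e, so w(e) < w(f) and the new basis is lighter than B0. *)

From HB Require Import structures.
From mathcomp Require Import all_boot all_order all_algebra.
From mathcomp Require Import reals.

Set Implicit Arguments.
Unset Strict Implicit.
Unset Printing Implicit Defensive.
Import Order.TTheory GRing.Theory Num.Theory.
Local Open Scope ring_scope.

Section RankOf.
Variables (E : finType) (I : pred {set E}).

Lemma rank_of_le_card (X : {set E}) : (rank_of I X <= #|X|)%N.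
Proof. by apply/bigmax_leqP => Y /andP[sYX _]; apply: subset_leq_card. Qed.

Lemma leq_rank_of (X Y : {set E}) : Y \subset X -> I Y -> (#|Y| <= rank_of I X)%N.
Proof.
by move=> sYX IY; apply: (leq_bigmax_cond (F := fun Y : {set E} => #|Y|)); rewrite sYX.
Qed.

Lemma rank_of_id (X : {set E}) : I X -> rank_of I X = #|X|.
Proof. by move=> IX; apply/eqP; rewrite eqn_leq rank_of_le_card leq_rank_of. Qed.

Lemma rank_of_setU1_eq_dep (X : {set E}) x :
  x \notin X -> rank_of I (x |: X) = rank_of I X -> ~~ I (x |: X).
Proof.
move=> xX eq_r; apply/negP => IxX.
by have := rank_of_le_card X; rewrite -eq_r rank_of_id // cardsU1 xX ltnn.
Qed.

End RankOf.

Section Matroid.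
Variables (E : finType) (M : matroid E).

Lemma indep_rankE (X : {set E}) : indep M X = (rank M X == #|X|).
Proof.
apply/idP/eqP => [/rank_of_id // | ].
pose P (Y : {set E}) := (Y \subset X) && indep M Y.
have P0 : P set0 by rewrite /P sub0set indep0.
rewrite /rank /rank_of -/P (bigop.bigmax_eq_arg _ P0).
case: arg_maxnP => // Y /andP[sYX IY] _ cY.
suff <- : Y = X by [].
by apply/eqP; rewrite eqEcard sYX cY leqnn.
Qed.

Definition max_indep_in (Y Z : {set E}) : Prop :=
  [/\ indep M Z, Z \subset Y & forall y, y \in Y -> y \notin Z -> ~~ indep M (y |: Z)].

Lemma max_indep_in_exists (X Y : {set E}) :
  indep M X -> X \subset Y -> exists2 Z, max_indep_in Y Z & X \subset Z.
Proof.
move=> IX sXY; pose P Z := [&& indep M Z, X \subset Z & Z \subset Y].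
have PX : P X by rewrite /P IX subxx.
have [Z /and3P[IZ sXZ sZY] Zmax] := arg_maxnP (fun Z : {set E} => #|Z|) PX.
exists Z => //; split=> // y yY yZ; apply/negP => IyZ.
have /Zmax : P (y |: Z).
  by rewrite /P IyZ (subset_trans sXZ (subsetUr _ _)) subUset sub1set yY.
by rewrite cardsU1 yZ add1n /= ltnn.
Qed.

Lemma max_indep_in_card (Y Z W : {set E}) :
  max_indep_in Y Z -> indep M W -> W \subset Y -> (#|W| <= #|Z|)%N.
Proof.
move=> [IZ _ Zmax] IW sWY; rewrite leqNgt; apply/negP => ltZW.
have [w /setDP[wW wZ] IwZ] := indep_aug IZ IW ltZW.
by have := Zmax w (subsetP sWY w wW) wZ; rewrite IwZ.
Qed.

Lemma basis_indep (B : {set E}) : is_basis M B -> indep M B.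
Proof. by case/andP. Qed.

Lemma basis_card (B W : {set E}) : is_basis M B -> indep M W -> (#|W| <= #|B|)%N.
Proof.
case/andP=> IB /forallP Bmax IW; apply: (max_indep_in_card (Y := setT)) => //.
by split=> // y _; apply/implyP.
Qed.

Lemma basis_of_card (B Z : {set E}) :
  is_basis M B -> indep M Z -> (#|B| <= #|Z|)%N -> is_basis M Z.
Proof.
move=> bB IZ leBZ; rewrite /is_basis IZ; apply/forallP => g; apply/implyP => gZ.
apply/negP => IgZ; have := basis_card bB IgZ.
by rewrite cardsU1 gZ add1n ltnNge leBZ.
Qed.

(* [T] is a maximal independent subset of [X :|: T], hence of maximum size
   there; so [e |: T] augments a maximal [W] with [X \subset W] by [e] alone. *)
Lemma indep_setU1_of_closure (T X : {set E}) e :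
  indep M (e |: T) -> e \notin T -> indep M X ->
  (forall x, x \in X -> (x \in T) || ~~ indep M (x |: T)) -> indep M (e |: X).
Proof.
move=> IeT eT IX XclT.
have IT : indep M T := indep_sub IeT (subsetUr _ _).
have maxT : max_indep_in (X :|: T) T.
  split=> [||y]; rewrite ?subsetUr // in_setU => /orP[yX|->] // yT.
  by have := XclT y yX; rewrite (negbTE yT).
have [W [IW sWXT Wmax] sXW] := max_indep_in_exists IX (subsetUl X T).
have ltW : (#|W| < #|e |: T|)%N.
  by rewrite cardsU1 eT add1n ltnS (max_indep_in_card maxT).
have [y /setDP[] ] := indep_aug IW IeT ltW.
rewrite in_setU1 => /orP[/eqP-> _ IeW | yT yW].
  by apply: indep_sub IeW _; rewrite setUS.
by move/negP: (Wmax y (subsetP (subsetUr X T) y yT) yW).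
Qed.

Lemma basis_exchange_indep (B X : {set E}) e :
  is_basis M B -> e \notin B -> X \subset B -> indep M (e |: X) ->
  exists2 f, f \in B :\: X & is_basis M (e |: (B :\ f)).
Proof.
move=> bB eB sXB IeX.
have [Z maxZ sXZ] := max_indep_in_exists IeX (setUS _ sXB).
have [IZ sZeB _] := maxZ.
have leBZ : (#|B| <= #|Z|)%N.
  by apply: max_indep_in_card maxZ (basis_indep bB) (subsetUr _ _).
have /properP[_ [f feB fZ]] : Z \proper e |: B.
  rewrite properEneq sZeB andbT; apply: contraTneq IZ => ->.
  by have /forallP/(_ e) := (andP bB).2; rewrite eB.
have eZ : e \in Z by rewrite (subsetP sXZ) ?setU11.
have fB : f \in B.
  by move: feB; rewrite in_setU1 => /orP[/eqP fe | //]; rewrite fe eZ in fZ.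
have sZ : Z \subset e |: (B :\ f).
  apply/subsetP => z zZ; have zf : z != f by apply: contraNneq fZ => <-.
  by move: (subsetP sZeB z zZ); rewrite !in_setU1 in_setD1 zf.
have ZE : Z = e |: (B :\ f).
  apply/eqP; rewrite eqEcard sZ cardsU1 in_setD1 (negbTE eB) andbF add1n.
  by rewrite (cardsD1 f B) fB add1n in leBZ.
exists f; last by rewrite -ZE (basis_of_card bB IZ).
by rewrite in_setD fB andbT; apply: contra fZ => fX; rewrite (subsetP sXZ) // setU1r.
Qed.

End Matroid.

Section Minor.
Variables (E : finType) (M : matroid E) (D K : {set E}).
Hypothesis indepK : indep M K.

Lemma minor_indepE (Y : {set E}) :
  minor_indep M D K Y = (Y \subset minor_ground D K) && indep M (Y :|: K).
Proof.
rewrite /minor_indep; case sYG: (Y \subset _) => //=.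
have /disjoint_setI0 YK : [disjoint Y & K].
  by rewrite disjoints_subset (subset_trans sYG) // setCS subsetUr.
have rK : rank M K = #|K| by apply/eqP; rewrite -indep_rankE.
by rewrite (indep_rankE M) cardsU YK cards0 subn0 rK.
Qed.

Lemma minor_span_dep (Y : {set E}) x :
  Y \subset minor_ground D K -> x \in minor_span M D K Y ->
  (x \in Y :|: K) || ~~ indep M (x |: (Y :|: K)).
Proof.
move=> sYG; rewrite inE => /andP[xG /eqP eq_r].
rewrite in_setU; case: (boolP (x \in Y)) => //= xY.
have := rank_of_setU1_eq_dep xY eq_r.
by rewrite minor_indepE subUset sub1set xG sYG setUA => ->; rewrite orbT.
Qed.

Lemma indep_setU1_minor_span (B X : {set E}) e :
  minor_indep M D K B -> e \in B -> indep M X ->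
  X \subset minor_span M D K (B :\ e) :|: K -> indep M (e |: X).
Proof.
rewrite minor_indepE => /andP[sBG IBK] eB IX sX.
set T := (B :\ e) :|: K.
have eTE : e |: T = B :|: K by rewrite /T setUA setD1K.
have eT : e \notin T.
  rewrite !inE eqxx /=; have := subsetP sBG e eB.
  by rewrite !inE negb_or => /andP[].
have sBeG : B :\ e \subset minor_ground D K := subset_trans (subD1set B e) sBG.
apply: (indep_setU1_of_closure (T := T)) => //; first by rewrite eTE.
move=> x /(subsetP sX); rewrite in_setU => /orP[xS | xK].
  exact: minor_span_dep xS.
by rewrite in_setU xK orbT.
Qed.

End Minor.

Lemma basis_weight_exchange (R : realType) (E : finType) (w : E -> R)
    (B : {set E}) e f :
  e \notin B -> f \in B ->
  basis_weight w (e |: (B :\ f)) = basis_weight w B + (w e - w f).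
Proof.
move=> eB fB; rewrite /basis_weight big_setU1 ?in_setD1 ?(negbTE eB) ?andbF //=.
by rewrite (big_setD1 f fB) /= [RHS]addrC addrA subrK.
Qed.

Lemma verifies_wt_MWB (R : realType) (E : finType) (MM : wu_matroid R E)
    (Q B : {set E}) :
  verifies MM Q B -> is_MWB MM (wt MM) B.
Proof. by apply; split=> // x; apply: wt_in. Qed.

Theorem mainTheorem10 (R : realType) (E : finType) (MM : wu_matroid R E)
  (D K B : {set E}) (e : E) :
  compatible_minor MM D K ->
  minor_is_basis (mat MM) D K B ->
  e \in B ->
  e \in minor_ground D K :\: minor_span (mat MM) D K (B :\ e) ->
  (forall f, f \in minor_ground D K :\: minor_span (mat MM) D K (B :\ e) ->
     f != e -> wt MM e < wt MM f) ->
  compatible_minor MM D (e |: K).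
Proof.
(* e lies outside span_M'(B - e) anyway, since B is independent in M'. *)
move=> [Q [B0 [optQ vQB0 sKB0 DB0]]] /andP[IB _] eB _ e_min.
exists Q, B0; split=> //; rewrite subUset sKB0 andbT sub1set.
have [bB0 B0min] := verifies_wt_MWB vQB0.
have IK : indep (mat MM) K := indep_sub (basis_indep bB0) sKB0.
apply: contraT => eB0.
set S := minor_span (mat MM) D K (B :\ e).
have IeX : indep (mat MM) (e |: (B0 :&: (S :|: K))).
  apply: (indep_setU1_minor_span IK IB eB); last exact: subsetIr.
  exact: indep_sub (basis_indep bB0) (subsetIl _ _).
have [f /setDP[fB0 fX] bZ] := basis_exchange_indep bB0 eB0 (subsetIl _ _) IeX.
have fGS : f \in minor_ground D K :\: S.
  move: fX; rewrite in_setI fB0 in_setU negb_or => /andP[fS fK].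
  rewrite in_setD fS !inE negb_or fK andbT /=.
  by apply: contraTN fB0 => fD; rewrite (disjointFr DB0 fD).
have fe : f != e by apply: contraNneq eB0 => <-.
have := B0min _ bZ; rewrite basis_weight_exchange // lerDl subr_ge0.
by rewrite leNgt e_min.
Qed.
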